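(* Let $T$ be an attack-defence tree and $\llbracket T\rrbracket$ its encoding in the rewrite theory $\mathcal{R}_{ADT}$ described in the context. If the minimal time to perform the main (root) attack in $T$ is $t$, then there exist $a$, $SA$ and $SD$ such that $\mathcal{R}_{ADT} \vdash \llbracket T\rrbracket \to^{!} [a,t,SA,SD]$.
   Context: An attack-defence tree (ADTree) $T$ is a tree whose leaves are attack actions (each with a time and a cost) or defence actions, and whose inner nodes are gates: OR (unordered children, succeeds iff some child succeeds), AND (unordered children in parallel, succeeds iff all succeed), SAND (ordered children executed sequentially), and NOT (single child, succeeds iff the child fails; encodes counter-defence gates). Gates may carry their own time and cost. The time of an attack on the root is computed bottom-up: maximum over AND children, sum over SAND children, the chosen child for OR, plus each gate's own time. Rewrite theory $\mathcal{R}_{ADT}$: each node is an object with attributes time, cost, agents (1 for attack leaves, 0 for gates), accumulated time acctime and cost (initially 0), a set used, its children, and a status in $\{\mathrm{Unknown},\mathrm{Succeed},\mathrm{Fail}\}$ initially Unknown; $\llbracket T\rrbracket=\{Q;Cnf\}$ with $Q$ the root and $Cnf$ the multiset of node objects. Rules: Unknown attack/defence leaves may become Succeed or Fail. OR: a Succeed pending child $o$ makes the Unknown gate Succeed, empties its pending children, records $o$ in used, sets acctime/cost to the gate's own plus $o$'s accumulated values and agents to $o$'s; Fail children are removed; no pending children makes it Fail. AND: Succeed children are removed from pending and recorded, acctime combined by max and agents by sum; a Fail child makes it Fail; no pending children makes it Succeed. SAND: a Succeed first child is removed and recorded, acctime combined by sum and agents by max; failing first child gives Fail; empty list gives Succeed.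 NOT: child Succeed gives Fail, child Fail gives Succeed. END: when the root is Succeed, $\{Q;Cnf\}$ rewrites to the summary term $[a,t,SA,SD]$ of the root's agents $a$, accumulated time $t$, the set $SA$ of used attacks and the set $SD$ of active defences. $\mathcal{R}\vdash u\to^{!}u'$ means $u$ rewrites in zero or more steps to an irreducible $u'$. *)

From Stdlib Require Import List Relations.
From mathcomp Require Import all_boot.
Set Implicit Arguments. Unset Strict Implicit. Unset Printing Implicit Defensive.

Inductive adt : Type :=
| AttL  (time cost : nat)
| DefL
| OrG   (time cost : nat) (cs : seq adt)
| AndG  (time cost : nat) (cs : seq adt)
| SandG (time cost : nat) (cs : seq adt)
| NotG  (time cost : nat) (c : adt).

(* Attack semantics: [succ T t] = there is an attack scenario (choice  *)
(* of success/failure of the leaves and of the child chosen at OR      *)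
(* gates) in which the root of T succeeds with time t, computed        *)
(* bottom-up; [fails T] = there is a scenario in which T fails.        *)
Inductive succ : adt -> nat -> Prop :=
| succ_att ti co : succ (AttL ti co) ti
| succ_def : succ DefL 0
| succ_or ti co cs c t :
    List.In c cs -> succ c t -> succ (OrG ti co cs) (ti + t)
| succ_and ti co cs ts :
    size ts = size cs ->
    (forall i, i < size cs -> succ (nth DefL cs i) (nth 0 ts i)) ->
    succ (AndG ti co cs) (ti + foldr maxn 0 ts)
| succ_sand ti co cs ts :
    size ts = size cs ->
    (forall i, i < size cs -> succ (nth DefL cs i) (nth 0 ts i)) ->
    succ (SandG ti co cs) (ti + sumn ts)
| succ_not ti co c : fails c -> succ (NotG ti co c) ti
with fails : adt -> Prop :=
| fails_att ti co : fails (AttL ti co)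
| fails_def : fails DefL
| fails_or ti co cs : (forall c, List.In c cs -> fails c) -> fails (OrG ti co cs)
| fails_and ti co cs c : List.In c cs -> fails c -> fails (AndG ti co cs)
| fails_sand ti co pre c post :
    (forall d, List.In d pre -> exists t, succ d t) -> fails c ->
    fails (SandG ti co (pre ++ c :: post))
| fails_not ti co c t : succ c t -> fails (NotG ti co c).

Definition min_time (T : adt) (t : nat) : Prop :=
  succ T t /\ forall t', succ T t' -> t <= t'.

Inductive status := Unknown | Succeed | Fail.
Inductive kind := KAtt | KDef | KOr | KAnd | KSand | KNot.

Definition is_katt (k : kind) : bool := if k is KAtt then true else false.
Definition is_kdef (k : kind) : bool := if k is KDef then true else false.

Definition status_eqb (a b : status) : bool :=
  match a, b with
  | Unknown, Unknown | Succeed, Succeed | Fail, Fail => true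
  | _, _ => false end.

Record obj := Obj {
  oid : nat;
  okind : kind;
  otime : nat;
  ocost : nat;
  agents : nat;
  acctime : nat;
  acccost : nat;
  used : seq nat;        (* used nodes (recorded transitively) *)
  pending : seq nat;     (* children still pending (ordered for SAND) *)
  ostatus : status }.

Definition set_status (o : obj) s :=
  Obj (oid o) (okind o) (otime o) (ocost o) (agents o) (acctime o) (acccost o)
      (used o) (pending o) s.

(* configuration term {Q ; Cnf} or summary term [a, t, SA, SD] *)
Inductive term :=
| Conf (q : nat) (cnf : seq obj)
| Summary (a t : nat) (SA SD : seq nat).

Definition lookup (cnf : seq obj) (i : nat) : option obj :=
  ohead [seq o <- cnf | oid o == i].

Definition upd (cnf : seq obj) (o : obj) : seq obj :=
  [seq if oid o' == oid o then o else o' | o' <- cnf].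

Definition is_att (cnf : seq obj) (i : nat) : bool :=
  if lookup cnf i is Some o then is_katt (okind o) else false.

Inductive step : term -> term -> Prop :=
| r_att_succ q cnf o : List.In o cnf -> okind o = KAtt -> ostatus o = Unknown ->
    step (Conf q cnf) (Conf q (upd cnf
      (Obj (oid o) KAtt (otime o) (ocost o) (agents o) (otime o) (ocost o)
           (used o) (pending o) Succeed)))
| r_def_succ q cnf o : List.In o cnf -> okind o = KDef -> ostatus o = Unknown ->
    step (Conf q cnf) (Conf q (upd cnf (set_status o Succeed)))
| r_leaf_fail q cnf o : List.In o cnf -> (okind o = KAtt \/ okind o = KDef) ->
    ostatus o = Unknown ->
    step (Conf q cnf) (Conf q (upd cnf (set_status o Fail)))
| r_or_succ q cnf g c oc : List.In g cnf -> okind g = KOr -> ostatus g = Unknown ->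
    c \in pending g -> lookup cnf c = Some oc -> ostatus oc = Succeed ->
    step (Conf q cnf) (Conf q (upd cnf
      (Obj (oid g) KOr (otime g) (ocost g) (agents oc)
           (otime g + acctime oc) (ocost g + acccost oc)
           (c :: used oc ++ used g) [::] Succeed)))
| r_or_rm q cnf g c oc : List.In g cnf -> okind g = KOr -> ostatus g = Unknown ->
    c \in pending g -> lookup cnf c = Some oc -> ostatus oc = Fail ->
    step (Conf q cnf) (Conf q (upd cnf
      (Obj (oid g) KOr (otime g) (ocost g) (agents g) (acctime g) (acccost g)
           (used g) (rem c (pending g)) Unknown)))
| r_or_fail q cnf g : List.In g cnf -> okind g = KOr -> ostatus g = Unknown ->
    pending g = [::] -> step (Conf q cnf) (Conf q (upd cnf (set_status g Fail)))
| r_and_rm q cnf g c oc : List.In g cnf -> okind g = KAnd -> ostatus g = Unknown ->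
    c \in pending g -> lookup cnf c = Some oc -> ostatus oc = Succeed ->
    step (Conf q cnf) (Conf q (upd cnf
      (Obj (oid g) KAnd (otime g) (ocost g) (agents g + agents oc)
           (maxn (acctime g) (acctime oc)) (acccost g + acccost oc)
           (c :: used oc ++ used g) (rem c (pending g)) Unknown)))
| r_and_fail q cnf g c oc : List.In g cnf -> okind g = KAnd -> ostatus g = Unknown ->
    c \in pending g -> lookup cnf c = Some oc -> ostatus oc = Fail ->
    step (Conf q cnf) (Conf q (upd cnf (set_status g Fail)))
| r_and_succ q cnf g : List.In g cnf -> okind g = KAnd -> ostatus g = Unknown ->
    pending g = [::] ->
    step (Conf q cnf) (Conf q (upd cnf
      (Obj (oid g) KAnd (otime g) (ocost g) (agents g)
           (otime g + acctime g) (ocost g + acccost g) (used g) [::] Succeed)))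
| r_sand_rm q cnf g c rest oc : List.In g cnf -> okind g = KSand ->
    ostatus g = Unknown -> pending g = c :: rest ->
    lookup cnf c = Some oc -> ostatus oc = Succeed ->
    step (Conf q cnf) (Conf q (upd cnf
      (Obj (oid g) KSand (otime g) (ocost g) (maxn (agents g) (agents oc))
           (acctime g + acctime oc) (acccost g + acccost oc)
           (c :: used oc ++ used g) rest Unknown)))
| r_sand_fail q cnf g c rest oc : List.In g cnf -> okind g = KSand ->
    ostatus g = Unknown -> pending g = c :: rest ->
    lookup cnf c = Some oc -> ostatus oc = Fail ->
    step (Conf q cnf) (Conf q (upd cnf (set_status g Fail)))
| r_sand_succ q cnf g : List.In g cnf -> okind g = KSand -> ostatus g = Unknown ->
    pending g = [::] ->
    step (Conf q cnf) (Conf q (upd cnf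
      (Obj (oid g) KSand (otime g) (ocost g) (agents g)
           (otime g + acctime g) (ocost g + acccost g) (used g) [::] Succeed)))
| r_not_fail q cnf g c oc : List.In g cnf -> okind g = KNot -> ostatus g = Unknown ->
    pending g = [:: c] -> lookup cnf c = Some oc -> ostatus oc = Succeed ->
    step (Conf q cnf) (Conf q (upd cnf (set_status g Fail)))
| r_not_succ q cnf g c oc : List.In g cnf -> okind g = KNot -> ostatus g = Unknown ->
    pending g = [:: c] -> lookup cnf c = Some oc -> ostatus oc = Fail ->
    step (Conf q cnf) (Conf q (upd cnf
      (Obj (oid g) KNot (otime g) (ocost g) 0 (otime g) (ocost g)
           (used g) [::] Succeed)))
| r_end q cnf r : lookup cnf q = Some r -> ostatus r = Succeed ->
    step (Conf q cnf)
      (Summary (agents r) (acctime r)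
         [seq i <- (if is_katt (okind r) then q :: used r else used r)
            | is_att cnf i]
         [seq oid o | o <- cnf & is_kdef (okind o) &&
                                 status_eqb (ostatus o) Succeed]).

Definition irreducible (u : term) : Prop := forall v, ~ step u v.
Definition rewrites_to_nf (u u' : term) : Prop :=
  clos_refl_trans term step u u' /\ irreducible u'.

(* Encoding [[T]]: nodes get identifiers in preorder starting at n;    *)
(* returns the objects and the next free identifier.                   *)
Definition mk_node (i : nat) (k : kind) (ti co ag : nat) (ch : seq nat) : obj :=
  Obj i k ti co ag 0 0 [::] ch Unknown.

Fixpoint enc (T : adt) (n : nat) : seq obj * nat :=
  let encl := fix encl (cs : seq adt) (k : nat) : seq obj * seq nat * nat :=
    match cs with
    | [::] => ([::], [::], k)
    | c :: cs' =>
        let (o1, k1) := enc c k in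
        let '(o2, ids, k2) := encl cs' k1 in (o1 ++ o2, k :: ids, k2)
    end in
  match T with
  | AttL ti co => ([:: mk_node n KAtt ti co 1 [::]], n.+1)
  | DefL => ([:: mk_node n KDef 0 0 0 [::]], n.+1)
  | OrG ti co cs => let '(os, ids, m) := encl cs n.+1 in
                    (mk_node n KOr ti co 0 ids :: os, m)
  | AndG ti co cs => let '(os, ids, m) := encl cs n.+1 in
                    (mk_node n KAnd ti co 0 ids :: os, m)
  | SandG ti co cs => let '(os, ids, m) := encl cs n.+1 in
                    (mk_node n KSand ti co 0 ids :: os, m)
  | NotG ti co c => let (os, m) := enc c n.+1 in
                    (mk_node n KNot ti co 0 [:: n.+1] :: os, m)
  end.

Definition encode (T : adt) : term := Conf 0 (enc T 0).1.

(* Every attack scenario of T can be replayed in R_ADT.  By induction on T, the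
   encoding of a subtree rewrites, whatever surrounds it, to a configuration in
   which its root object has the status the scenario assigns to it and, if it
   succeeds, the time of the scenario: the gate's own time plus the time of the
   chosen child (OR), the maximum (AND) or the sum (SAND) of the children's
   times.  Rewriting is local because the encoding numbers every subtree by an
   interval of fresh identifiers, so the rewrites of sibling subtrees can be
   framed into the whole configuration.  For a scenario of duration t, one
   final END step yields the summary [a, t, SA, SD], which no rule rewrites. *)

From mathcomp Require Import all_boot.
From Stdlib Require Import Relations.Relation_Operators.
Set Implicit Arguments. Unset Strict Implicit. Unset Printing Implicit Defensive.

Lemma In_nth_index (T : Type) (x0 x : T) s :
  List.In x s -> exists2 i, i < size s & nth x0 s i = x.
Proof.
elim: s => //= y s IH [-> | /IH [i lt_i <-]]; first by exists 0.
by exists i.+1.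
Qed.

Lemma nth_In (T : Type) (x0 : T) s i : i < size s -> List.In (nth x0 s i) s.
Proof. by elim: s i => //= y s IH [|i] lt_i; [left | right; apply: IH]. Qed.

(* The local fixpoint of [enc], made global so that it can be reasoned about. *)
Fixpoint enc_children (cs : seq adt) (k : nat) : seq obj * seq nat * nat :=
  match cs with
  | [::] => ([::], [::], k)
  | c :: cs' =>
      let (o1, k1) := enc c k in
      let '(o2, rs, k2) := enc_children cs' k1 in (o1 ++ o2, k :: rs, k2)
  end.

Lemma enc_children_cons c cs k :
  enc_children (c :: cs) k =
  ((enc c k).1 ++ (enc_children cs (enc c k).2).1.1,
   k :: (enc_children cs (enc c k).2).1.2, (enc_children cs (enc c k).2).2).
Proof. by rewrite /=; case: (enc c k) => o1 k1 /=; case: (enc_children cs k1) => [[]]. Qed.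

Definition enc_gate (K : kind) ti co cs n : seq obj * nat :=
  (mk_node n K ti co 0 (enc_children cs n.+1).1.2 :: (enc_children cs n.+1).1.1,
   (enc_children cs n.+1).2).

Lemma enc_OrG ti co cs n : enc (OrG ti co cs) n = enc_gate KOr ti co cs n.
Proof. by rewrite /enc_gate /= -/enc_children; case: (enc_children cs n.+1) => [[]]. Qed.

Lemma enc_AndG ti co cs n : enc (AndG ti co cs) n = enc_gate KAnd ti co cs n.
Proof. by rewrite /enc_gate /= -/enc_children; case: (enc_children cs n.+1) => [[]]. Qed.

Lemma enc_SandG ti co cs n : enc (SandG ti co cs) n = enc_gate KSand ti co cs n.
Proof. by rewrite /enc_gate /= -/enc_children; case: (enc_children cs n.+1) => [[]]. Qed.

Lemma enc_NotG ti co c n : enc (NotG ti co c) n = enc_gate KNot ti co [:: c] n.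
Proof. by rewrite /enc_gate /=; case: (enc c n.+1) => os m /=; rewrite cats0. Qed.

Lemma size_enc_children cs k : size (enc_children cs k).1.2 = size cs.
Proof. by elim: cs k => // c cs IH k; rewrite enc_children_cons /= IH. Qed.

Section NestedInduction.
Variable P : adt -> Prop.
Hypotheses (P_AttL : forall ti co, P (AttL ti co)) (P_DefL : P DefL).
Hypothesis P_OrG : forall ti co cs, (forall c, List.In c cs -> P c) -> P (OrG ti co cs).
Hypothesis P_AndG : forall ti co cs, (forall c, List.In c cs -> P c) -> P (AndG ti co cs).
Hypothesis P_SandG : forall ti co cs, (forall c, List.In c cs -> P c) -> P (SandG ti co cs).
Hypothesis P_NotG : forall ti co c, P c -> P (NotG ti co c).

Fixpoint adt_nested_ind (T : adt) : P T :=
  let fix all_children (cs : seq adt) : forall c, List.In c cs -> P c :=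
    match cs with
    | [::] => fun c (H : List.In c [::]) => False_ind _ H
    | c0 :: cs' => fun c H =>
        match H with
        | or_introl E => eq_ind c0 P (adt_nested_ind c0) c E
        | or_intror H' => all_children cs' c H'
        end
    end in
  match T with
  | AttL ti co => P_AttL ti co
  | DefL => P_DefL
  | OrG ti co cs => P_OrG ti co (all_children cs)
  | AndG ti co cs => P_AndG ti co (all_children cs)
  | SandG ti co cs => P_SandG ti co (all_children cs)
  | NotG ti co c => P_NotG ti co (adt_nested_ind c)
  end.

End NestedInduction.

(** * Identifiers of the encoding *)

Definition ids (s : seq obj) : seq nat := map oid s.

Definition ids_within (a b : nat) (s : seq obj) : bool :=
  all (fun i => a <= i < b) (ids s).

Lemma ids_within_cat a b s1 s2 :
  ids_within a b (s1 ++ s2) = ids_within a b s1 && ids_within a b s2.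
Proof. by rewrite /ids_within /ids map_cat all_cat. Qed.

Lemma ids_within_cons a b o s :
  ids_within a b (o :: s) = (a <= oid o < b) && ids_within a b s.
Proof. by []. Qed.

Lemma ids_within_widen a b a' b' s :
  a' <= a -> b <= b' -> ids_within a b s -> ids_within a' b' s.
Proof.
move=> le_a le_b /allP within; apply/allP => i /within /andP [ge_a lt_b].
by rewrite (leq_trans le_a ge_a) (leq_trans lt_b le_b).
Qed.

Lemma notin_ids_within a b s : ids_within a.+1 b s -> a \notin ids s.
Proof. by move=> /allP within; apply/negP => /within; rewrite ltnn. Qed.

Definition enc_in_range (T : adt) : Prop :=
  forall n, n < (enc T n).2 /\ ids_within n (enc T n).2 (enc T n).1.

Lemma enc_children_ids_of cs k :
  (forall c, List.In c cs -> enc_in_range c) ->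
  k <= (enc_children cs k).2 /\ ids_within k (enc_children cs k).2 (enc_children cs k).1.1.
Proof.
elim: cs k => [|c cs IH] k enc_c_ids; first by rewrite leqnn.
rewrite enc_children_cons /= ids_within_cat.
have [lt_k within_c] := enc_c_ids c (or_introl erefl) k.
have [le_k' within_cs] := IH (enc c k).2 (fun c' hc => enc_c_ids c' (or_intror hc)).
rewrite (leq_trans (ltnW lt_k) le_k') (ids_within_widen _ le_k' within_c) //.
by split=> //; apply: ids_within_widen (ltnW lt_k) _ within_cs.
Qed.

Lemma enc_gate_ids K ti co cs n :
  (forall c, List.In c cs -> enc_in_range c) ->
  n < (enc_gate K ti co cs n).2 /\
  ids_within n (enc_gate K ti co cs n).2 (enc_gate K ti co cs n).1.
Proof.
move=> /(enc_children_ids_of n.+1) [lt_n within]; split => //.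
by rewrite ids_within_cons /= leqnn lt_n; apply: ids_within_widen within.
Qed.

Lemma enc_ids T : enc_in_range T.
Proof.
elim/adt_nested_ind: T => [ti co | | ti co cs IH | ti co cs IH | ti co cs IH | ti co c IH] n.
- by rewrite /= ids_within_cons /= !leqnn.
- by rewrite /= ids_within_cons /= !leqnn.
- by rewrite enc_OrG; apply: enc_gate_ids.
- by rewrite enc_AndG; apply: enc_gate_ids.
- by rewrite enc_SandG; apply: enc_gate_ids.
- by rewrite enc_NotG; apply: enc_gate_ids => _ [<- | []].
Qed.

Lemma enc_children_ids cs k :
  k <= (enc_children cs k).2 /\ ids_within k (enc_children cs k).2 (enc_children cs k).1.1.
Proof. by apply: enc_children_ids_of => c _; apply: enc_ids. Qed.

Lemma lookup_enc_root T n : exists o, lookup (enc T n).1 n = Some o.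
Proof.
by case: T => *; rewrite ?enc_OrG ?enc_AndG ?enc_SandG ?enc_NotG /lookup /= eqxx; eexists.
Qed.

Definition ids_disjoint (s1 s2 : seq obj) : Prop :=
  forall i, i \in ids s1 -> i \notin ids s2.

Lemma ids_within_disjoint a b c s1 s2 :
  ids_within a b s1 -> ids_within b c s2 -> ids_disjoint s1 s2 /\ ids_disjoint s2 s1.
Proof.
move=> /allP within1 /allP within2.
suff sep i : i \in ids s1 -> i \in ids s2 -> False.
  by split=> i hi; apply/negP => hi'; apply: (sep i).
by move=> /within1 /andP [_ lt_b] /within2 /andP [ge_b _]; rewrite ltnNge ge_b in lt_b.
Qed.

Lemma mem_ids o s : List.In o s -> oid o \in ids s.
Proof. by elim: s => //= o' s IH [-> | /IH]; rewrite inE ?eqxx // => ->; rewrite orbT. Qed.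

Lemma ids_upd s o : ids (upd s o) = ids s.
Proof. by elim: s => //= o' s ->; case: eqP => // ->. Qed.

Lemma upd_notin s o : oid o \notin ids s -> upd s o = s.
Proof.
elim: s => //= o' s IH; rewrite inE negb_or => /andP [neq_o notin_s].
by rewrite IH // eq_sym (negbTE neq_o).
Qed.

Lemma upd_cat s1 s2 o : upd (s1 ++ s2) o = upd s1 o ++ upd s2 o.
Proof. exact: map_cat. Qed.

Lemma upd_frame pre seg post o :
  oid o \in ids seg -> ids_disjoint pre seg -> ids_disjoint post seg ->
  upd (pre ++ seg ++ post) o = pre ++ upd seg o ++ post.
Proof.
move=> in_seg pre_seg post_seg.
have notin s : ids_disjoint s seg -> oid o \notin ids s.
  by move=> disj; apply/negP => /disj; rewrite in_seg.
by rewrite !upd_cat (upd_notin (notin _ pre_seg)) (upd_notin (notin _ post_seg)).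
Qed.

Lemma lookup_cat s1 s2 i :
  lookup (s1 ++ s2) i = if lookup s1 i is Some o then Some o else lookup s2 i.
Proof. by rewrite /lookup filter_cat; case: [seq o <- s1 | oid o == i]. Qed.

Lemma lookup_cons o s i :
  lookup (o :: s) i = if oid o == i then Some o else lookup s i.
Proof. by rewrite /lookup /=; case: eqP. Qed.

Lemma lookup_notin s i : i \notin ids s -> lookup s i = None.
Proof.
elim: s => // o s IH; rewrite inE negb_or => /andP [neq_i notin_s].
by rewrite lookup_cons eq_sym (negbTE neq_i) IH.
Qed.

Lemma lookup_Some_ids s i o : lookup s i = Some o -> i \in ids s.
Proof. by elim: s => // o' s IH; rewrite lookup_cons inE eq_sym; case: eqP => // _ /IH. Qed.

Lemma lookup_frame pre seg post i o :
  ids_disjoint pre seg -> lookup seg i = Some o -> lookup (pre ++ seg ++ post) i = Some o.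
Proof.
move=> pre_seg look; rewrite lookup_cat lookup_notin ?lookup_cat ?look //.
by apply/negP => /pre_seg; rewrite (lookup_Some_ids look).
Qed.

Lemma In_frame pre seg post (o : obj) : List.In o seg -> List.In o (pre ++ seg ++ post).
Proof. by move=> in_seg; apply/List.in_or_app; right; apply/List.in_or_app; left. Qed.

(** * Local rewriting *)

(* Only END depends on the root identifier, so all other steps are uniform in it. *)
Definition cstep (s s' : seq obj) : Prop := forall q, step (Conf q s) (Conf q s').

Definition csteps : seq obj -> seq obj -> Prop := clos_refl_trans (seq obj) cstep.

Lemma cstep_frame pre seg seg' post :
  ids_disjoint pre seg -> ids_disjoint post seg -> cstep seg seg' ->
  cstep (pre ++ seg ++ post) (pre ++ seg' ++ post).
Proof.
move=> pre_seg post_seg st q; have st_q := st q; inversion st_q; subst;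
  (rewrite -upd_frame //=; last by apply: mem_ids; eassumption);
  [ eapply r_att_succ | eapply r_def_succ | eapply r_leaf_fail
  | eapply r_or_succ | eapply r_or_rm | eapply r_or_fail
  | eapply r_and_rm | eapply r_and_fail | eapply r_and_succ
  | eapply r_sand_rm | eapply r_sand_fail | eapply r_sand_succ
  | eapply r_not_fail | eapply r_not_succ ];
  eauto using In_frame, lookup_frame.
Qed.

Lemma cstep_ids s s' : cstep s s' -> ids s' = ids s.
Proof. by move=> st; have st0 := st 0; inversion st0; apply: ids_upd. Qed.

Lemma csteps_ids s s' : csteps s s' -> ids s' = ids s.
Proof. by elim=> [? ? /cstep_ids | | ? ? ? _ e1 _ e2] //; rewrite e2 e1. Qed.

Lemma csteps_frame pre seg seg' post :
  ids_disjoint pre seg -> ids_disjoint post seg -> csteps seg seg' ->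
  csteps (pre ++ seg ++ post) (pre ++ seg' ++ post).
Proof.
move=> + + st; elim: st => [x y st | x | x y z st_xy IH1 _ IH2] pre_x post_x.
- exact/rt_step/cstep_frame.
- exact: rt_refl.
- have e := csteps_ids st_xy; rewrite /ids_disjoint e in IH2.
  exact: rt_trans (IH1 pre_x post_x) (IH2 pre_x post_x).
Qed.

Lemma csteps_Conf q s s' :
  csteps s s' -> clos_refl_trans term step (Conf q s) (Conf q s').
Proof.
by elim=> [x y st | x | x y z _ IH1 _ IH2]; [apply: rt_step | apply: rt_refl | apply: rt_trans IH2].
Qed.

Definition node_sat (s : seq obj) (i : nat) (P : obj -> Prop) : Prop :=
  exists2 o, lookup s i = Some o & P o.

Definition reaches (s : seq obj) (i : nat) (P : obj -> Prop) : Prop :=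
  exists2 s', csteps s s' & node_sat s' i P.

Definition succeeded (o : obj) : Prop := ostatus o = Succeed.
Definition succeeded_in (t : nat) (o : obj) : Prop := ostatus o = Succeed /\ acctime o = t.
Definition failed (o : obj) : Prop := ostatus o = Fail.

Definition acctime_at (s : seq obj) (i : nat) : nat :=
  if lookup s i is Some o then acctime o else 0.

Lemma node_sat_weaken s i (P Q : obj -> Prop) :
  (forall o, P o -> Q o) -> node_sat s i P -> node_sat s i Q.
Proof. by move=> PQ [o look /PQ]; exists o. Qed.

Lemma reaches_csteps s s' i P : csteps s s' -> reaches s' i P -> reaches s i P.
Proof. by move=> st [s'' st' sat]; exists s'' => //; apply: rt_trans st st'. Qed.

Lemma reaches_weaken s i (P Q : obj -> Prop) :
  (forall o, P o -> Q o) -> reaches s i P -> reaches s i Q.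
Proof. by move=> PQ [s' st sat]; exists s' => //; apply: node_sat_weaken sat. Qed.

Lemma reaches_refl s i P : node_sat s i P -> reaches s i P.
Proof. by exists s => //; apply: rt_refl. Qed.

(** * Rewriting a gate object *)

Section HeadNode.
Variables (s : seq obj) (n : nat).
Hypothesis n_fresh : n \notin ids s.

Lemma lookup_head_fresh g i o :
  oid g = n -> lookup s i = Some o -> lookup (g :: s) i = Some o.
Proof.
move=> eg look; rewrite lookup_cons; case: eqP => // eq_i.
by move: n_fresh; rewrite -eg eq_i (lookup_Some_ids look).
Qed.

Lemma cstep_head g g' :
  oid g = n -> oid g' = n ->
  (forall q, step (Conf q (g :: s)) (Conf q (upd (g :: s) g'))) -> cstep (g :: s) (g' :: s).
Proof. by move=> eg eg' st q; move: (st q); rewrite /= eg eg' eqxx upd_notin ?eg'. Qed.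

Lemma reaches_head_step g g' P :
  oid g = n -> oid g' = n ->
  (forall q, step (Conf q (g :: s)) (Conf q (upd (g :: s) g'))) -> P g' ->
  reaches (g :: s) n P.
Proof.
move=> eg eg' st Pg'; exists (g' :: s); first exact/rt_step/cstep_head.
by exists g'; rewrite // lookup_cons eg' eqxx.
Qed.

Lemma or_node_drop_failed ti co ag a ac u (l : seq nat) :
  (forall c, c \in l -> node_sat s c failed) ->
  csteps (Obj n KOr ti co ag a ac u l Unknown :: s)
         (Obj n KOr ti co ag a ac u [::] Unknown :: s).
Proof.
elim: l => [|c l IH] failed_l; first exact: rt_refl.
have [o look fail_o] := failed_l c (mem_head c l).
apply: rt_trans _ (IH _); last by move=> c' in_l; apply: failed_l; rewrite inE in_l orbT.
apply: rt_step; apply: cstep_head => // q.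
pose g := Obj n KOr ti co ag a ac u (c :: l) Unknown.
have look_g : lookup (g :: s) c = Some o by apply: lookup_head_fresh look.
have := @r_or_rm q (g :: s) g c o (or_introl erefl) erefl erefl (mem_head c l) look_g fail_o.
by rewrite /= !eqxx.
Qed.

Lemma and_node_collect ti co ag a ac u (l : seq nat) :
  (forall c, c \in l -> node_sat s c succeeded) ->
  exists ag' ac' u',
    csteps (Obj n KAnd ti co ag a ac u l Unknown :: s)
           (Obj n KAnd ti co ag' (maxn a (foldr maxn 0 (map (acctime_at s) l))) ac' u' [::]
                Unknown :: s).
Proof.
elim: l ag a ac u => [|c l IH] ag a ac u succ_l.
  by exists ag, ac, u; rewrite maxn0; apply: rt_refl.
have [o look succ_o] := succ_l c (mem_head c l).
have [|ag' [ac' [u' st]]] :=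
  IH (ag + agents o) (maxn a (acctime o)) (ac + acccost o) (c :: used o ++ u).
  by move=> c' in_l; apply: succ_l; rewrite inE in_l orbT.
have time_c : acctime_at s c = acctime o by rewrite /acctime_at look.
exists ag', ac', u'; rewrite /= time_c maxnA; apply: rt_trans _ st.
apply: rt_step; apply: cstep_head => // q.
pose g := Obj n KAnd ti co ag a ac u (c :: l) Unknown.
have look_g : lookup (g :: s) c = Some o by apply: lookup_head_fresh look.
have := @r_and_rm q (g :: s) g c o (or_introl erefl) erefl erefl (mem_head c l) look_g succ_o.
by rewrite /= !eqxx.
Qed.

Lemma sand_node_collect ti co ag a ac u (l rest : seq nat) :
  (forall c, c \in l -> node_sat s c succeeded) ->
  exists ag' ac' u',
    csteps (Obj n KSand ti co ag a ac u (l ++ rest) Unknown :: s)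
           (Obj n KSand ti co ag' (a + sumn (map (acctime_at s) l)) ac' u' rest Unknown :: s).
Proof.
elim: l ag a ac u => [|c l IH] ag a ac u succ_l.
  by exists ag, ac, u; rewrite addn0; apply: rt_refl.
have [o look succ_o] := succ_l c (mem_head c l).
have [|ag' [ac' [u' st]]] :=
  IH (maxn ag (agents o)) (a + acctime o) (ac + acccost o) (c :: used o ++ u).
  by move=> c' in_l; apply: succ_l; rewrite inE in_l orbT.
have time_c : acctime_at s c = acctime o by rewrite /acctime_at look.
exists ag', ac', u'; rewrite /= time_c addnA; apply: rt_trans _ st.
apply: rt_step; apply: cstep_head => // q.
pose g := Obj n KSand ti co ag a ac u (c :: l ++ rest) Unknown.
have look_g : lookup (g :: s) c = Some o by apply: lookup_head_fresh look.
exact: (@r_sand_rm q (g :: s) g c (l ++ rest) o (or_introl erefl) erefl erefl erefl look_g succ_o).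
Qed.

Lemma or_node_succeeds ti co (l : seq nat) c t :
  c \in l -> node_sat s c (succeeded_in t) ->
  reaches (mk_node n KOr ti co 0 l :: s) n (succeeded_in (ti + t)).
Proof.
move=> in_l [o look [succ_o time_o]]; pose g := mk_node n KOr ti co 0 l.
have look_g : lookup (g :: s) c = Some o by apply: lookup_head_fresh look.
apply: (reaches_head_step (g' := Obj n KOr ti co (agents o) (ti + acctime o)
          (co + acccost o) (c :: used o ++ [::]) [::] Succeed)) => // [q|].
- exact: (@r_or_succ q (g :: s) g c o (or_introl erefl) erefl erefl in_l look_g succ_o).
- by rewrite /succeeded_in /= time_o.
Qed.

Lemma or_node_fails ti co (l : seq nat) :
  (forall c, c \in l -> node_sat s c failed) ->
  reaches (mk_node n KOr ti co 0 l :: s) n failed.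
Proof.
move=> failed_l; apply: reaches_csteps (or_node_drop_failed ti co 0 0 0 [::] failed_l) _.
pose g := Obj n KOr ti co 0 0 0 [::] [::] Unknown.
apply: (reaches_head_step (g' := set_status g Fail)) => // q.
exact: (@r_or_fail q (g :: s) g (or_introl erefl)).
Qed.

Lemma and_node_succeeds ti co (l : seq nat) :
  (forall c, c \in l -> node_sat s c succeeded) ->
  reaches (mk_node n KAnd ti co 0 l :: s) n
    (succeeded_in (ti + foldr maxn 0 (map (acctime_at s) l))).
Proof.
move=> succ_l; have [ag [ac [u st]]] := and_node_collect ti co 0 0 0 [::] succ_l.
apply: reaches_csteps st _; rewrite max0n.
pose g := Obj n KAnd ti co ag (foldr maxn 0 (map (acctime_at s) l)) ac u [::] Unknown.
apply: (reaches_head_step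
          (g' := Obj n KAnd ti co ag (ti + acctime g) (co + ac) u [::] Succeed)) => // q.
exact: (@r_and_succ q (g :: s) g (or_introl erefl)).
Qed.

Lemma and_node_fails ti co (l : seq nat) c :
  c \in l -> node_sat s c failed -> reaches (mk_node n KAnd ti co 0 l :: s) n failed.
Proof.
move=> in_l [o look failed_o]; pose g := mk_node n KAnd ti co 0 l.
have look_g : lookup (g :: s) c = Some o by apply: lookup_head_fresh look.
apply: (reaches_head_step (g' := set_status g Fail)) => // q.
exact: (@r_and_fail q (g :: s) g c o (or_introl erefl) erefl erefl in_l look_g failed_o).
Qed.

Lemma sand_node_succeeds ti co (l : seq nat) :
  (forall c, c \in l -> node_sat s c succeeded) ->
  reaches (mk_node n KSand ti co 0 l :: s) n
    (succeeded_in (ti + sumn (map (acctime_at s) l))).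
Proof.
move=> succ_l; have [ag [ac [u st]]] := sand_node_collect ti co 0 0 0 [::] [::] succ_l.
rewrite cats0 in st; apply: reaches_csteps st _; rewrite add0n.
pose g := Obj n KSand ti co ag (sumn (map (acctime_at s) l)) ac u [::] Unknown.
apply: (reaches_head_step
          (g' := Obj n KSand ti co ag (ti + acctime g) (co + ac) u [::] Succeed)) => // q.
exact: (@r_sand_succ q (g :: s) g (or_introl erefl)).
Qed.

Lemma sand_node_fails ti co (l : seq nat) c rest :
  (forall x, x \in l -> node_sat s x succeeded) -> node_sat s c failed ->
  reaches (mk_node n KSand ti co 0 (l ++ c :: rest) :: s) n failed.
Proof.
move=> succ_l [o look failed_o].
have [ag [ac [u st]]] := sand_node_collect ti co 0 0 0 [::] (c :: rest) succ_l.
apply: reaches_csteps st _.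
pose g := Obj n KSand ti co ag (0 + sumn (map (acctime_at s) l)) ac u (c :: rest) Unknown.
have look_g : lookup (g :: s) c = Some o by apply: lookup_head_fresh look.
apply: (reaches_head_step (g' := set_status g Fail)) => // q.
exact: (@r_sand_fail q (g :: s) g c rest o (or_introl erefl) erefl erefl erefl look_g failed_o).
Qed.

Lemma not_node_succeeds ti co c :
  node_sat s c failed -> reaches (mk_node n KNot ti co 0 [:: c] :: s) n (succeeded_in ti).
Proof.
move=> [o look failed_o]; pose g := mk_node n KNot ti co 0 [:: c].
have look_g : lookup (g :: s) c = Some o by apply: lookup_head_fresh look.
apply: (reaches_head_step (g' := Obj n KNot ti co 0 ti co [::] [::] Succeed)) => // q.
exact: (@r_not_succ q (g :: s) g c o (or_introl erefl) erefl erefl erefl look_g failed_o).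
Qed.

Lemma not_node_fails ti co c :
  node_sat s c succeeded -> reaches (mk_node n KNot ti co 0 [:: c] :: s) n failed.
Proof.
move=> [o look succ_o]; pose g := mk_node n KNot ti co 0 [:: c].
have look_g : lookup (g :: s) c = Some o by apply: lookup_head_fresh look.
apply: (reaches_head_step (g' := set_status g Fail)) => // q.
exact: (@r_not_fail q (g :: s) g c o (or_introl erefl) erefl erefl erefl look_g succ_o).
Qed.

End HeadNode.

Lemma node_sat_catl s1 s2 i P : node_sat s1 i P -> node_sat (s1 ++ s2) i P.
Proof. by case=> o look Po; exists o; rewrite // lookup_cat look. Qed.

Lemma node_sat_catr s1 s2 i P :
  i \notin ids s1 -> node_sat s2 i P -> node_sat (s1 ++ s2) i P.
Proof. by move=> notin_s1 [o look Po]; exists o; rewrite // lookup_cat lookup_notin. Qed.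

Lemma node_sat_nth_mem s l (Phi : nat -> obj -> Prop) (P : obj -> Prop) :
  (forall i, i < size l -> node_sat s (nth 0 l i) (Phi i)) ->
  (forall i o, Phi i o -> P o) -> forall x, x \in l -> node_sat s x P.
Proof.
move=> sat PhiP x in_l; rewrite -(nth_index 0 in_l).
by apply: node_sat_weaken (PhiP _) (sat _ _); rewrite index_mem.
Qed.

Lemma map_acctime_at s l ts :
  size ts = size l ->
  (forall i, i < size l -> node_sat s (nth 0 l i) (succeeded_in (nth 0 ts i))) ->
  map (acctime_at s) l = ts.
Proof.
move=> size_ts sat; apply: (@eq_from_nth _ 0); rewrite ?size_map // => i lt_i.
by rewrite (nth_map 0) //; have [o look [_ <-]] := sat i lt_i; rewrite /acctime_at look.
Qed.

(** * Replaying attack scenarios *)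

Definition enc_reaches (T : adt) (P : obj -> Prop) : Prop :=
  forall n, reaches (enc T n).1 n P.

Lemma enc_reaches_true T : enc_reaches T (fun _ => True).
Proof. by move=> n; have [o look] := lookup_enc_root T n; apply: reaches_refl; exists o. Qed.

Lemma enc_children_reaches cs k (Phi : nat -> obj -> Prop) :
  (forall i, i < size cs -> enc_reaches (nth DefL cs i) (Phi i)) ->
  exists2 s, csteps (enc_children cs k).1.1 s &
    forall i, i < size cs -> node_sat s (nth 0 (enc_children cs k).1.2 i) (Phi i).
Proof.
elim: cs k Phi => [|c cs IH] k Phi reach_cs; first by exists [::]; first apply: rt_refl.
rewrite enc_children_cons /=.
have [s1 st1 sat1] := reach_cs 0 erefl k.
have [s2 st2 sat2] := IH (enc c k).2 (fun i => Phi i.+1) (fun i => reach_cs i.+1).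
have [_ within_c] := enc_ids c k.
have [_ within_cs] := enc_children_ids cs (enc c k).2.
have [c_cs cs_c] := ids_within_disjoint within_c within_cs.
have ids_s1 := csteps_ids st1.
exists (s1 ++ s2).
- apply: rt_trans (csteps_frame (pre := [::]) _ cs_c st1) _ => //.
  have := csteps_frame (pre := s1) (post := [::]) _ _ st2; rewrite !cats0; apply => //.
  by rewrite /ids_disjoint ids_s1.
- case=> [|i] lt_i /=; first exact: node_sat_catl.
  apply: node_sat_catr (sat2 i lt_i); rewrite ids_s1.
  apply/negP => /c_cs; rewrite -(csteps_ids st2).
  by have [o look _] := sat2 i lt_i; rewrite (lookup_Some_ids look).
Qed.

Lemma enc_gate_reaches K ti co cs n (Phi : nat -> obj -> Prop) P :
  (forall i, i < size cs -> enc_reaches (nth DefL cs i) (Phi i)) ->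
  (forall s, n \notin ids s ->
     (forall i, i < size (enc_children cs n.+1).1.2 ->
        node_sat s (nth 0 (enc_children cs n.+1).1.2 i) (Phi i)) ->
     reaches (mk_node n K ti co 0 (enc_children cs n.+1).1.2 :: s) n P) ->
  reaches (enc_gate K ti co cs n).1 n P.
Proof.
move=> reach_cs gate_reaches; have [s st sat] := enc_children_reaches n.+1 reach_cs.
have [_ within] := enc_children_ids cs n.+1.
have n_fresh : n \notin ids s by rewrite (csteps_ids st); apply: notin_ids_within within.
apply: reaches_csteps (gate_reaches s n_fresh _); last by rewrite size_enc_children.
pose g := mk_node n K ti co 0 (enc_children cs n.+1).1.2.
have := csteps_frame (pre := [:: g]) (post := [::]) _ _ st.
rewrite !cats0; apply => // i; rewrite inE => /eqP ->.
exact: notin_ids_within within.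
Qed.

Lemma enc_gate_reaches_child K ti co cs c n Q P :
  List.In c cs -> enc_reaches c Q ->
  (forall s x, n \notin ids s -> x \in (enc_children cs n.+1).1.2 -> node_sat s x Q ->
     reaches (mk_node n K ti co 0 (enc_children cs n.+1).1.2 :: s) n P) ->
  reaches (enc_gate K ti co cs n).1 n P.
Proof.
move=> /(In_nth_index DefL) [i lt_i <-] reach_c gate_reaches.
apply: (enc_gate_reaches (Phi := fun j => if j == i then Q else fun _ => True)).
  by move=> j _; case: eqP => [-> // | _]; apply: enc_reaches_true.
have lt_i' : i < size (enc_children cs n.+1).1.2 by rewrite size_enc_children.
move=> s n_fresh sat; apply: gate_reaches n_fresh (mem_nth 0 lt_i') _.
by have := sat i lt_i'; rewrite eqxx.
Qed.

Lemma enc_reaches_AttL_succ ti co : enc_reaches (AttL ti co) (succeeded_in ti).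
Proof.
move=> n; pose g := mk_node n KAtt ti co 1 [::].
apply: (@reaches_head_step [::] n isT g (Obj n KAtt ti co 1 ti co [::] [::] Succeed)) => // q.
exact: (@r_att_succ q [:: g] g (or_introl erefl)).
Qed.

Lemma enc_reaches_AttL_fail ti co : enc_reaches (AttL ti co) failed.
Proof.
move=> n; pose g := mk_node n KAtt ti co 1 [::].
apply: (@reaches_head_step [::] n isT g (set_status g Fail)) => // q.
exact: (@r_leaf_fail q [:: g] g (or_introl erefl) (or_introl erefl)).
Qed.

Lemma enc_reaches_DefL_succ : enc_reaches DefL (succeeded_in 0).
Proof.
move=> n; pose g := mk_node n KDef 0 0 0 [::].
apply: (@reaches_head_step [::] n isT g (set_status g Succeed)) => // q.
exact: (@r_def_succ q [:: g] g (or_introl erefl)).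
Qed.

Lemma enc_reaches_DefL_fail : enc_reaches DefL failed.
Proof.
move=> n; pose g := mk_node n KDef 0 0 0 [::].
apply: (@reaches_head_step [::] n isT g (set_status g Fail)) => // q.
exact: (@r_leaf_fail q [:: g] g (or_introl erefl) (or_intror erefl)).
Qed.

Lemma enc_reaches_OrG_succ ti co cs c t :
  List.In c cs -> enc_reaches c (succeeded_in t) ->
  enc_reaches (OrG ti co cs) (succeeded_in (ti + t)).
Proof.
move=> in_c reach_c n; rewrite enc_OrG.
apply: (enc_gate_reaches_child in_c reach_c) => s x n_fresh in_x sat_x.
exact: (or_node_succeeds n_fresh ti co in_x sat_x).
Qed.

Lemma enc_reaches_OrG_fail ti co cs :
  (forall c, List.In c cs -> enc_reaches c failed) -> enc_reaches (OrG ti co cs) failed.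
Proof.
move=> reach_cs n; rewrite enc_OrG.
apply: (enc_gate_reaches (Phi := fun _ => failed)) => [i lt_i | s n_fresh sat].
  exact/reach_cs/nth_In.
by apply: or_node_fails => //; apply: node_sat_nth_mem sat _.
Qed.

Lemma enc_reaches_AndG_succ ti co cs ts :
  size ts = size cs ->
  (forall i, i < size cs -> enc_reaches (nth DefL cs i) (succeeded_in (nth 0 ts i))) ->
  enc_reaches (AndG ti co cs) (succeeded_in (ti + foldr maxn 0 ts)).
Proof.
move=> size_ts reach_cs n; rewrite enc_AndG.
apply: (enc_gate_reaches reach_cs) => s n_fresh sat.
rewrite -(map_acctime_at _ sat); last by rewrite size_enc_children.
by apply: and_node_succeeds => //; apply: node_sat_nth_mem sat _ => i o [].
Qed.

Lemma enc_reaches_AndG_fail ti co cs c :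
  List.In c cs -> enc_reaches c failed -> enc_reaches (AndG ti co cs) failed.
Proof.
move=> in_c reach_c n; rewrite enc_AndG.
apply: (enc_gate_reaches_child in_c reach_c) => s x n_fresh in_x sat_x.
exact: (and_node_fails n_fresh ti co in_x sat_x).
Qed.

Lemma enc_reaches_SandG_succ ti co cs ts :
  size ts = size cs ->
  (forall i, i < size cs -> enc_reaches (nth DefL cs i) (succeeded_in (nth 0 ts i))) ->
  enc_reaches (SandG ti co cs) (succeeded_in (ti + sumn ts)).
Proof.
move=> size_ts reach_cs n; rewrite enc_SandG.
apply: (enc_gate_reaches reach_cs) => s n_fresh sat.
rewrite -(map_acctime_at _ sat); last by rewrite size_enc_children.
by apply: sand_node_succeeds => //; apply: node_sat_nth_mem sat _ => i o [].
Qed.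

Lemma enc_reaches_SandG_fail ti co pre c post :
  (forall d, List.In d pre -> enc_reaches d succeeded) -> enc_reaches c failed ->
  enc_reaches (SandG ti co (pre ++ c :: post)) failed.
Proof.
move=> reach_pre reach_c n; rewrite enc_SandG; set p := size pre.
pose Phi j := if j < p then succeeded else if j == p then failed else fun _ => True.
apply: (enc_gate_reaches (Phi := Phi)) => [i lt_i | s n_fresh sat].
  rewrite /Phi nth_cat; case: ltnP => [lt_ip | _]; first exact/reach_pre/nth_In.
  by case: eqP => [-> | _]; [rewrite subnn | apply: enc_reaches_true].
set l := (enc_children _ n.+1).1.2 in sat *.
have lt_p : p < size l by rewrite size_enc_children size_cat /= addnS ltnS leq_addr.
rewrite -(cat_take_drop p l) (drop_nth 0 lt_p); apply: (sand_node_fails n_fresh) => [x in_pre|].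
  have lt_x : index x (take p l) < p by rewrite -{2}(size_takel (ltnW lt_p)) index_mem.
  rewrite -(nth_index 0 in_pre) nth_take //.
  by have := sat _ (ltn_trans lt_x lt_p); rewrite /Phi lt_x.
by have := sat p lt_p; rewrite /Phi ltnn eqxx.
Qed.

Lemma enc_reaches_NotG_succ ti co c :
  enc_reaches c failed -> enc_reaches (NotG ti co c) (succeeded_in ti).
Proof.
move=> reach_c n; rewrite enc_NotG.
have in_c : List.In c [:: c] by left.
apply: (enc_gate_reaches_child in_c reach_c) => s x n_fresh.
by rewrite enc_children_cons inE => /eqP ->; apply: not_node_succeeds.
Qed.

Lemma enc_reaches_NotG_fail ti co c :
  enc_reaches c succeeded -> enc_reaches (NotG ti co c) failed.
Proof.
move=> reach_c n; rewrite enc_NotG.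
have in_c : List.In c [:: c] by left.
apply: (enc_gate_reaches_child in_c reach_c) => s x n_fresh.
by rewrite enc_children_cons inE => /eqP ->; apply: not_node_fails.
Qed.

Lemma succ_AttL_inv ti co t : succ (AttL ti co) t -> t = ti.
Proof. by move=> st; inversion st. Qed.

Lemma succ_DefL_inv t : succ DefL t -> t = 0.
Proof. by move=> st; inversion st. Qed.

Lemma succ_OrG_inv ti co cs t :
  succ (OrG ti co cs) t -> exists c t', [/\ List.In c cs, succ c t' & t = ti + t'].
Proof. by move=> st; inversion st; exists c, t0. Qed.

Lemma succ_AndG_inv ti co cs t :
  succ (AndG ti co cs) t -> exists ts, [/\ size ts = size cs,
    forall i, i < size cs -> succ (nth DefL cs i) (nth 0 ts i) & t = ti + foldr maxn 0 ts].
Proof. by move=> st; inversion st; exists ts. Qed.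

Lemma succ_SandG_inv ti co cs t :
  succ (SandG ti co cs) t -> exists ts, [/\ size ts = size cs,
    forall i, i < size cs -> succ (nth DefL cs i) (nth 0 ts i) & t = ti + sumn ts].
Proof. by move=> st; inversion st; exists ts. Qed.

Lemma succ_NotG_inv ti co c t : succ (NotG ti co c) t -> fails c /\ t = ti.
Proof. by move=> st; inversion st. Qed.

Lemma fails_OrG_inv ti co cs : fails (OrG ti co cs) -> forall c, List.In c cs -> fails c.
Proof. by move=> fl; inversion fl. Qed.

Lemma fails_AndG_inv ti co cs : fails (AndG ti co cs) -> exists2 c, List.In c cs & fails c.
Proof. by move=> fl; inversion fl; exists c. Qed.

Lemma fails_SandG_inv ti co cs :
  fails (SandG ti co cs) -> exists pre c post, [/\ cs = pre ++ c :: post,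
    forall d, List.In d pre -> exists t, succ d t & fails c].
Proof. by move=> fl; inversion fl; exists pre, c, post. Qed.

Lemma fails_NotG_inv ti co c : fails (NotG ti co c) -> exists t, succ c t.
Proof. by move=> fl; inversion fl; exists t. Qed.

Lemma enc_simulates T :
  (forall t, succ T t -> enc_reaches T (succeeded_in t)) /\
  (fails T -> enc_reaches T failed).
Proof.
have succ_weaken c t : enc_reaches c (succeeded_in t) -> enc_reaches c succeeded.
  by move=> reach n; apply: reaches_weaken (reach n) => o [].
elim/adt_nested_ind: T => [ti co | | ti co cs IH | ti co cs IH | ti co cs IH | ti co c IH].
- split=> [t /succ_AttL_inv -> | _]; [exact: enc_reaches_AttL_succ | exact: enc_reaches_AttL_fail].
- split=> [t /succ_DefL_inv -> | _]; [exact: enc_reaches_DefL_succ | exact: enc_reaches_DefL_fail].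
- split=> [t /succ_OrG_inv [c [t' [in_c st ->]]] | /fails_OrG_inv fl].
    exact: enc_reaches_OrG_succ in_c ((IH c in_c).1 t' st).
  by apply: enc_reaches_OrG_fail => c in_c; apply: (IH c in_c).2 (fl c in_c).
- split=> [t /succ_AndG_inv [ts [size_ts st ->]] | /fails_AndG_inv [c in_c fl]].
    by apply: enc_reaches_AndG_succ => // i lt_i; apply: (IH _ (nth_In _ lt_i)).1 (st i lt_i).
  exact: enc_reaches_AndG_fail in_c ((IH c in_c).2 fl).
- split=> [t /succ_SandG_inv [ts [size_ts st ->]] | /fails_SandG_inv [pre [c [post [ecs st fl]]]]].
    by apply: enc_reaches_SandG_succ => // i lt_i; apply: (IH _ (nth_In _ lt_i)).1 (st i lt_i).
  rewrite {}ecs in IH *.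
  have in_c : List.In c (pre ++ c :: post) by apply/List.in_or_app; right; left.
  apply: enc_reaches_SandG_fail _ ((IH c in_c).2 fl) => d in_pre.
  have in_d : List.In d (pre ++ c :: post) by apply/List.in_or_app; left.
  have [t st_d] := st d in_pre.
  exact/succ_weaken/(IH d in_d).1/st_d.
- split=> [t /succ_NotG_inv [fl ->] | /fails_NotG_inv [t st]].
    exact/enc_reaches_NotG_succ/IH.2.
  exact/enc_reaches_NotG_fail/succ_weaken/(IH.1 t st).
Qed.

Theorem theorem2 (T : adt) (t : nat) :
  min_time T t ->
  exists (a : nat) (SA SD : seq nat), rewrites_to_nf (encode T) (Summary a t SA SD).
Proof.
case=> succ_T _; have [s st [o look [succ_o <-]]] := (enc_simulates T).1 t succ_T 0.
do 3 eexists; split.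
- exact: rt_trans (csteps_Conf 0 st) (rt_step _ _ _ _ (r_end look succ_o)).
- by move=> v st'; inversion st'.
Qed.
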